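(* Let $\Phi$ be a universal Horn sentence over a finite relational signature $\tau$. Then the following are equivalent: (1) $\mathrm{Mod}(\Phi)$ has the joint embedding property; (2) for all conjunctions of atomic $\tau$-formulas $\phi_1(\bar x_1)$ and $\phi_2(\bar x_2)$ with disjoint sets of variables such that $\Phi\wedge\phi_i(\bar x_i)$ is satisfiable for both $i\in\{1,2\}$, we have $\phi_1(\bar x_1)\wedge\phi_2(\bar x_2)\leq_\Phi \phi_1(\bar x_1)$.
   Context: Formulas are first-order over $\tau$ and do not use equality atoms. A universal sentence is Horn if its quantifier-free part is a conjunction of Horn clauses (disjunctions of atomic and negated atomic formulas with at most one positive disjunct). $\mathrm{Mod}(\Phi)$ is the class of all finite models of $\Phi$. A class $\mathcal{C}$ of $\tau$-structures has the joint embedding property if for all $\mathfrak{B}_1,\mathfrak{B}_2\in\mathcal{C}$ there is $\mathfrak{C}\in\mathcal{C}$ with embeddings $\mathfrak{B}_i\hookrightarrow\mathfrak{C}$, $i=1,2$. ''$\Phi\wedge\phi(\bar x)$ is satisfiable'' means some $\tau$-structure satisfies $\Phi$ together with $\phi$ under some assignment of the variables $\bar x$. For conjunctions of atomic $\tau$-formulas $\phi(\bar x)$ and $\psi(\bar x,\bar y)$, write $\psi(\bar x,\bar y)\leq_\Phi\phi(\bar x)$ if for every $\chi$ that is either $\bot$ or an atomic $\tau$-formula with free variables among $\bar x$: whenever $\Phi\models\forall\bar x,\bar y\,(\psi(\bar x,\bar y)\Rightarrow\chi(\bar x))$, also $\Phi\models\forall\bar x\,(\phi(\bar x)\Rightarrow\chi(\bar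 x))$. *)

From Stdlib Require Import List.
From mathcomp Require Import all_boot.
Set Implicit Arguments.
Unset Strict Implicit.
Unset Printing Implicit Defensive.

Section FO.
Variables (Sym : finType) (ar : Sym -> nat).

(* atomic formula R(x_1,...,x_{ar R}) (no equality atoms) *)
Record atom := Atom { asym : Sym; aargs : (ar asym).-tuple nat }.

(* Horn clause: (not a_1) \/ ... \/ (not a_k) \/ [optional positive atom] *)
Record hclause := HClause { hneg : seq atom; hpos : option atom }.

(* universal Horn sentence: universal closure of a conjunction of Horn clauses *)
Definition horn_sentence := seq hclause.

Record structure := Struct {
  carrier :> Type;
  rel : forall R : Sym, (ar R).-tuple carrier -> Prop }.

Definition holds (A : structure) (v : nat -> A) (a : atom) : Prop :=
  @rel A (asym a) (map_tuple v (aargs a)).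

Definition holds_conj (A : structure) (v : nat -> A) (phi : seq atom) : Prop :=
  forall a, In a phi -> holds v a.

Definition holds_opt (A : structure) (v : nat -> A) (chi : option atom) : Prop :=
  match chi with Some a => holds v a | None => False end.

Definition sat_clause (A : structure) (v : nat -> A) (c : hclause) : Prop :=
  holds_conj v (hneg c) -> holds_opt v (hpos c).

(* A |= Phi (first-order structures have nonempty domains) *)
Definition models (A : structure) (Phi : horn_sentence) : Prop :=
  inhabited A /\ forall (v : nat -> A) c, In c Phi -> sat_clause v c.

Definition finite_struct (A : structure) : Prop :=
  exists l : list A, forall x : A, In x l.

Definition embedding (A B : structure) (f : A -> B) : Prop :=
  injective f /\
  forall (R : Sym) (t : (ar R).-tuple A), @rel A R t <-> @rel B R (map_tuple f t).

Definition Mod_JEP (Phi : horn_sentence) : Prop :=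
  forall B1 B2 : structure,
    models B1 Phi -> finite_struct B1 -> models B2 Phi -> finite_struct B2 ->
    exists C : structure, models C Phi /\ finite_struct C /\
      (exists f : B1 -> C, embedding f) /\ (exists g : B2 -> C, embedding g).

Definition satisfiable (Phi : horn_sentence) (phi : seq atom) : Prop :=
  exists A : structure, models A Phi /\ exists v : nat -> A, holds_conj v phi.

Definition entails (Phi : horn_sentence) (psi : seq atom) (chi : option atom) : Prop :=
  forall A : structure, models A Phi -> forall v : nat -> A,
    holds_conj v psi -> holds_opt v chi.

Definition atom_vars_among (a : atom) (xs : seq nat) : Prop :=
  forall x, x \in tval (aargs a) -> x \in xs.

Definition conj_vars_among (phi : seq atom) (xs : seq nat) : Prop :=
  forall a, In a phi -> atom_vars_among a xs.

Definition opt_vars_among (chi : option atom) (xs : seq nat) : Prop :=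
  match chi with Some a => atom_vars_among a xs | None => True end.

Definition leq_Phi (Phi : horn_sentence) (psi phi : seq atom) (xs : seq nat) : Prop :=
  forall chi : option atom, opt_vars_among chi xs ->
    entails Phi psi chi -> entails Phi phi chi.

End FO.

From Pilot Require Import Defs.
From mathcomp Require Import all_boot.
From Stdlib Require List ClassicalEpsilon.

Set Implicit Arguments.
Unset Strict Implicit.

(* Naming the elements of a set [T] by variables, a conjunction [psi] of atoms
   presents the structure on [T] in which an atom holds iff [Phi /\ psi] entails it.
   Because [Phi] is Horn, such a structure is a model of [Phi] as soon as
   [Phi /\ psi] is consistent.

   (1) => (2): the structures presented by [phi1] and [phi2] on (a finite set containing)
   their variables are finite models; in a joint extension, [phi1 /\ phi2] holds under
   the combined valuation, and an atom over [x1] true there is true in the first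
   structure, i.e. entailed by [phi1] alone.

   (2) => (1): write the positive diagrams of [B1] and [B2] over disjoint variables and
   present a structure on [B1 + B2] by their union.  By (2) the union entails nothing
   new over the variables of either diagram: hence it is consistent, and both
   inclusions are embeddings. *)

Lemma map_tuple_comp (A B C : Type) n (f : B -> C) (g : A -> B) (t : n.-tuple A) :
  map_tuple (f \o g) t = map_tuple f (map_tuple g t).
Proof. by apply: val_inj; rewrite /= map_comp. Qed.

Lemma mem_In (T : eqType) (s : seq T) (x : T) : x \in s -> List.In x s.
Proof. by elim: s => //= y s IHs; rewrite in_cons => /predU1P [->|/IHs]; auto. Qed.

Definition asbool (P : Prop) : bool :=
  if ClassicalEpsilon.excluded_middle_informative P then true else false.

Lemma asboolP (P : Prop) : reflect P (asbool P).
Proof.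
by rewrite /asbool; case: ClassicalEpsilon.excluded_middle_informative; constructor.
Qed.

Section Horn.
Variables (Sym : finType) (ar : Sym -> nat) (Phi : horn_sentence ar).
Implicit Types (phi psi : seq (atom ar)) (a : atom ar) (xs : seq nat).

Definition atom_map (f : nat -> nat) a : atom ar := Atom (map_tuple f (aargs a)).

Lemma holds_atom_map (A : structure ar) (v : nat -> A) f a :
  holds v (atom_map f a) = holds (v \o f) a.
Proof. by rewrite /holds /= map_tuple_comp. Qed.

Lemma atom_map_id_in f a : {in tval (aargs a), f =1 id} -> atom_map f a = a.
Proof.
case: a => R t /= f_id; congr Atom; apply: val_inj.
by rewrite /= (eq_in_map f id _).1 ?map_id.
Qed.

Lemma holds_eq_in (A : structure ar) (v w : nat -> A) a :
  {in tval (aargs a), v =1 w} -> holds v a <-> holds w a.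
Proof.
move=> vw; rewrite /holds.
by have -> // : map_tuple v (aargs a) = map_tuple w (aargs a); apply/val_inj/eq_in_map.
Qed.

Lemma embedding_holds (A B : structure ar) (f : A -> B) (v : nat -> A) a :
  embedding f -> holds (f \o v) a <-> holds v a.
Proof. by case=> _ f_rel; rewrite /holds map_tuple_comp f_rel. Qed.

Lemma finite_struct_fin (T : finType) (rel : forall R, (ar R).-tuple T -> Prop) :
  finite_struct (Struct rel).
Proof. by exists (enum T) => x; apply: mem_In; rewrite mem_enum. Qed.

Lemma finite_struct_index (B : structure ar) :
  inhabited B -> finite_struct B ->
  exists n (ix : B -> 'I_n) (v : nat -> B), forall x, v (ix x) = x.
Proof.
case=> d [l l_all]; exists (length l).
have [ix ixK] : exists ix : B -> 'I_(length l), forall x, List.nth (ix x) l d = x.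
  apply: (ClassicalEpsilon.choice (fun x (i : 'I_(length l)) => List.nth i l d = x)) => x.
  have [i [/ltP i_lt nth_i]] := List.In_nth l x d (l_all x).
  by exists (Ordinal i_lt).
by exists ix, (fun k => List.nth k l d).
Qed.

Lemma entails_In phi a : List.In a phi -> entails Phi phi (Some a).
Proof. by move=> phi_a A _ v; apply. Qed.

Lemma entails_subset phi psi chi :
  (forall a, List.In a phi -> List.In a psi) -> entails Phi phi chi -> entails Phi psi chi.
Proof. by move=> phi_psi ent A mA v vpsi; apply: ent => // a /phi_psi; apply: vpsi. Qed.

Lemma satisfiable_not_entails_bot phi : satisfiable Phi phi -> ~ entails Phi phi None.
Proof. by case=> A [mA [v vphi]] /(_ A mA v vphi). Qed.

Definition presented (T : Type) psi (idx : T -> nat) : structure ar :=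
  Struct (fun R (t : (ar R).-tuple T) => entails Phi psi (Some (Atom (map_tuple idx t)))).

Lemma holds_presented (T : Type) psi (idx : T -> nat) (v : nat -> T) a :
  holds (A := presented psi idx) v a <-> entails Phi psi (Some (atom_map (idx \o v) a)).
Proof. by rewrite /holds /atom_map /= map_tuple_comp. Qed.

Lemma presented_models (T : Type) psi (idx : T -> nat) :
  inhabited T -> ~ entails Phi psi None -> models (presented psi idx) Phi.
Proof.
move=> inhT psi_consistent; split=> // u c c_Phi u_neg.
have neg_in A : models A Phi -> forall w : nat -> A,
    holds_conj w psi -> holds_conj (w \o idx \o u) (hneg c).
  move=> mA w wpsi a a_neg.
  by have /holds_presented/(_ A mA w wpsi) /= := u_neg a a_neg; rewrite holds_atom_map.
case E: (hpos c) => [p|] /=.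
  apply/holds_presented => A mA w wpsi /=; rewrite holds_atom_map.
  by have := mA.2 _ c c_Phi (neg_in A mA w wpsi); rewrite E.
apply: psi_consistent => A mA w wpsi.
by have := mA.2 _ c c_Phi (neg_in A mA w wpsi); rewrite E.
Qed.

(* Each variable of [xs] names itself; the remaining elements (there is at least one,
   even for [xs = [::]]) are harmless extra points. *)
Definition canon phi xs := presented phi (@nat_of_ord (\max_(x <- xs) x).+1).

Definition canon_val xs (x : nat) : 'I_(\max_(y <- xs) y).+1 := inord x.

Lemma canon_valK xs x : x \in xs -> canon_val xs x = x :> nat.
Proof. by move=> x_xs; rewrite inordK // ltnS (leq_bigmax_seq (F := id)). Qed.

Lemma canon_models phi xs : satisfiable Phi phi -> models (canon phi xs) Phi.
Proof.
move=> Sphi; apply: presented_models; first exact: inhabits ord0.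
exact: satisfiable_not_entails_bot.
Qed.

Lemma holds_canon phi xs a : atom_vars_among a xs ->
  holds (A := canon phi xs) (canon_val xs) a <-> entails Phi phi (Some a).
Proof. by move=> a_xs; rewrite holds_presented atom_map_id_in // => x /a_xs /canon_valK. Qed.

Lemma holds_embedded_canon phi xs (C : structure ar) (f : canon phi xs -> C)
    (u : nat -> C) a :
  embedding f -> {in xs, forall x, u x = f (canon_val xs x)} -> atom_vars_among a xs ->
  holds u a <-> entails Phi phi (Some a).
Proof.
move=> f_emb uf a_xs; apply: iff_trans (holds_canon phi a_xs).
apply: iff_trans (embedding_holds _ _ f_emb).
by apply: holds_eq_in => x /a_xs /uf.
Qed.

Definition jep_criterion : Prop :=
  forall (x1 x2 : seq nat) phi1 phi2,
    conj_vars_among phi1 x1 -> conj_vars_among phi2 x2 ->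
    (forall x, x \in x1 -> x \notin x2) ->
    satisfiable Phi phi1 -> satisfiable Phi phi2 ->
    leq_Phi Phi (phi1 ++ phi2) phi1 x1.

Lemma jep_criterion_of_JEP : Mod_JEP Phi -> jep_criterion.
Proof.
move=> jep x1 x2 phi1 phi2 phi1_x1 phi2_x2 x1_x2 S1 S2 chi chi_x1 ent A mA v vphi1.
have [C [mC [_ [[f f_emb] [g g_emb]]]]] :=
  jep _ _ (canon_models x1 S1) (finite_struct_fin _)
          (canon_models x2 S2) (finite_struct_fin _).
pose u x := if x \in x1 then f (canon_val x1 x) else g (canon_val x2 x).
have uf : {in x1, forall x, u x = f (canon_val x1 x)} by move=> x x_x1; rewrite /u x_x1.
have ug : {in x2, forall x, u x = g (canon_val x2 x)}.
  by move=> x x_x2; rewrite /u ifN //; apply: contraL x_x2; apply: x1_x2.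
have uphi : holds_conj u (phi1 ++ phi2).
  move=> a /List.in_app_iff [a_phi1|a_phi2].
  - by apply/(holds_embedded_canon f_emb uf (phi1_x1 a a_phi1)); apply: entails_In.
  - by apply/(holds_embedded_canon g_emb ug (phi2_x2 a a_phi2)); apply: entails_In.
move: chi_x1 (ent C mC u uphi); case: chi {ent} => [a a_x1 /= ua|//].
by have /(holds_embedded_canon f_emb uf a_x1) := ua; apply.
Qed.

Section Diagram.
Variables (n : nat) (name : 'I_n -> nat).

Definition name_atoms : seq (atom ar) :=
  List.flat_map (fun R => List.map (fun s : (ar R).-tuple 'I_n => Atom (map_tuple name s))
                                   (enum {: (ar R).-tuple 'I_n}))
                (enum Sym).

Definition diag (B : structure ar) (v : nat -> B) : seq (atom ar) :=
  List.filter (fun a => asbool (holds v a)) name_atoms.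

Lemma In_name_atoms R (s : (ar R).-tuple 'I_n) :
  List.In (Atom (map_tuple name s)) name_atoms.
Proof.
apply/List.in_flat_map; exists R; split; first by apply: mem_In; rewrite mem_enum.
by apply: List.in_map; apply: mem_In; rewrite mem_enum.
Qed.

Lemma name_atom_vars xs R (s : (ar R).-tuple 'I_n) :
  (forall i, name i \in xs) -> atom_vars_among (Atom (map_tuple name s)) xs.
Proof. by move=> name_xs x /mapP [i _ ->]. Qed.

Lemma diag_vars (B : structure ar) (v : nat -> B) xs :
  (forall i, name i \in xs) -> conj_vars_among (diag v) xs.
Proof.
move=> name_xs a /List.filter_In [/List.in_flat_map [R [_ /List.in_map_iff [s [<- _]]]] _].
exact: name_atom_vars.
Qed.

Lemma diag_holds (B : structure ar) (v : nat -> B) : holds_conj v (diag v).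
Proof. by move=> a /List.filter_In [_ /asboolP]. Qed.

Lemma entails_diag (B : structure ar) (v : nat -> B) (ix : B -> 'I_n) R
    (t : (ar R).-tuple B) :
  models B Phi -> (forall x, v (name (ix x)) = x) ->
  entails Phi (diag v) (Some (Atom (map_tuple (name \o ix) t))) <-> Defs.rel t.
Proof.
move=> mB vK.
have holds_t : holds v (Atom (map_tuple (name \o ix) t)) <-> Defs.rel t.
  rewrite /holds /= -map_tuple_comp.
  have -> // : map_tuple (v \o (name \o ix)) t = t.
  by apply: val_inj; rewrite /= (@eq_map _ _ (v \o (name \o ix)) id vK) map_id.
split=> [ent | t_rel]; first by have /= /holds_t := ent B mB v (@diag_holds _ v).
apply: entails_In; apply/List.filter_In; split; last exact/asboolP/holds_t.
by rewrite map_tuple_comp; apply: In_name_atoms.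
Qed.

Lemma diag_embedding (B : structure ar) (v : nat -> B) (ix : B -> 'I_n)
    (T : Type) psi (idx : T -> nat) (h : B -> T) xs :
  models B Phi -> injective h -> (forall x, v (name (ix x)) = x) ->
  (forall x, idx (h x) = name (ix x)) -> (forall i, name i \in xs) ->
  (forall a, atom_vars_among a xs ->
     entails Phi psi (Some a) <-> entails Phi (diag v) (Some a)) ->
  embedding (h : B -> presented psi idx).
Proof.
move=> mB h_inj vK idx_h name_xs psi_diag; split=> // R t.
rewrite -(entails_diag _ mB vK) /= -map_tuple_comp.
have -> : map_tuple (idx \o h) t = map_tuple (name \o ix) t.
  by apply: val_inj; apply/eq_map => x; apply: idx_h.
have a_xs : atom_vars_among (Atom (map_tuple (name \o ix) t)) xs.
  by rewrite map_tuple_comp; apply: name_atom_vars.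
exact: iff_sym (psi_diag _ a_xs).
Qed.

End Diagram.

Lemma JEP_of_jep_criterion : jep_criterion -> Mod_JEP Phi.
Proof.
move=> crit B1 B2 mB1 fin1 mB2 fin2.
have [n1 [ix1 [v1 v1K]]] := finite_struct_index mB1.1 fin1.
have [n2 [ix2 [e2 e2K]]] := finite_struct_index mB2.1 fin2.
pose name2 (i : 'I_n2) := n1 + i.
pose v2 k := e2 (k - n1).
have v2K x : v2 (name2 (ix2 x)) = x by rewrite /v2 /name2 addKn e2K.
pose phi1 := diag (@nat_of_ord n1) v1; pose phi2 := diag name2 v2.
have name1_in (i : 'I_n1) : nat_of_ord i \in iota 0 n1 by rewrite mem_iota add0n ltn_ord.
have name2_in i : name2 i \in iota n1 n2 by rewrite mem_iota leq_addr ltn_add2l ltn_ord.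
have S1 : satisfiable Phi phi1 by exists B1; split=> //; exists v1; apply: diag_holds.
have S2 : satisfiable Phi phi2 by exists B2; split=> //; exists v2; apply: diag_holds.
have crit12 : leq_Phi Phi (phi1 ++ phi2) phi1 (iota 0 n1).
  apply: (crit _ (iota n1 n2)) S1 S2;
    [exact: diag_vars name1_in | exact: diag_vars name2_in |].
  by move=> x; rewrite !mem_iota add0n => /andP [_ x_n1]; rewrite negb_and -ltnNge x_n1.
have crit21 : leq_Phi Phi (phi2 ++ phi1) phi2 (iota n1 n2).
  apply: (crit _ (iota 0 n1)) S2 S1;
    [exact: diag_vars name2_in | exact: diag_vars name1_in |].
  by move=> x; rewrite !mem_iota add0n => /andP [n1_x _]; rewrite negb_and -leqNgt n1_x orbT.
have swap chi : entails Phi (phi1 ++ phi2) chi -> entails Phi (phi2 ++ phi1) chi.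
  by apply: entails_subset => a; rewrite !List.in_app_iff; tauto.
pose idx z := match z with inl x => nat_of_ord (ix1 x) | inr y => name2 (ix2 y) end.
have [d1] := mB1.1.
exists (presented (phi1 ++ phi2) idx); split; [|split; [|split]].
- apply: presented_models; first exact: inhabits (inl d1).
  by move/(crit12 None I); apply: satisfiable_not_entails_bot.
- case: fin1 fin2 => [l1 l1_all] [l2 l2_all].
  exists (List.map inl l1 ++ List.map inr l2) => -[x|y]; apply/List.in_app_iff;
    [left|right]; exact: List.in_map.
- exists inl; apply: (diag_embedding mB1 _ v1K _ name1_in) => // [x y [] //|a a_x1].
  split; first exact: crit12.
  by apply: entails_subset => b b_phi1; apply/List.in_app_iff; left.
- exists inr; apply: (diag_embedding mB2 _ v2K _ name2_in) => // [x y [] //|a a_x2].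
  split; first by move/swap; apply: crit21.
  by apply: entails_subset => b b_phi2; apply/List.in_app_iff; right.
Qed.

End Horn.

Theorem lemma1 (Sym : finType) (ar : Sym -> nat) (Phi : horn_sentence ar) :
  Mod_JEP Phi <->
  (forall (x1 x2 : seq nat) (phi1 phi2 : seq (atom ar)),
      conj_vars_among phi1 x1 -> conj_vars_among phi2 x2 ->
      (forall x, x \in x1 -> x \notin x2) ->
      satisfiable Phi phi1 -> satisfiable Phi phi2 ->
      leq_Phi Phi (phi1 ++ phi2) phi1 x1).
Proof. by split; [apply: jep_criterion_of_JEP | apply: JEP_of_jep_criterion]. Qed.
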